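(* Let $\ell>r\ge 2$ be integers. The function $f$ defined on integers $k\ge r$ by \[ f(k)=\frac{(k-1)(k-2)\cdots(k-r+1)}{k^{\ell-1}} \] is unimodal and attains its maximum at a unique integer $m_{r,\ell}\ge r$.
   Context: A function $h:I\to\mathbb{R}$ on $I\subseteq\mathbb{R}$ is unimodal if there is $x_0\in I$ such that $h$ is non-decreasing on $I\cap(-\infty,x_0]$ and non-increasing on $I\cap(x_0,\infty)$. *)

From mathcomp Require Import all_boot all_order all_algebra.
Set Implicit Arguments. Unset Strict Implicit. Unset Printing Implicit Defensive.
Import Order.TTheory GRing.Theory Num.Theory.
Local Open Scope ring_scope.

Definition fkr (R : realFieldType) (r l k : nat) : R :=
  (\prod_(1 <= i < r) (k%:R - i%:R)) / (k%:R ^+ l.-1).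

Definition unimodal_on (R : realFieldType) (D : pred nat) (h : nat -> R) : Prop :=
  exists2 x0, D x0 &
    (forall x y, D x -> D y -> (x <= y)%N -> (y <= x0)%N -> h x <= h y) /\
    (forall x y, D x -> D y -> (x0 < x)%N -> (x <= y)%N -> h y <= h x).

(* Write n = l - 1.  Since f(k+1) (k+1-r) (k+1)^n = f(k) k^(n+1), f increases at k
   exactly when u(k) = geosum n k = sum_(i <= n) (k/(k+1))^i = ((k+1)^(n+1) - k^(n+1)) / (k+1)^n
   is below r, and decreases when it is above r.  The sum u(k) is nondecreasing in k,
   never equals r (k+1 divides (k+1-r)(k+1)^n but is coprime to k^(n+1)), and exceeds
   n >= r for k = n(n+1) by Bernoulli's inequality.  Hence f strictly increases up to the
   first k with u(k) > r and strictly decreases from there on. *)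

From mathcomp Require Import all_boot all_order all_algebra.
From mathcomp Require Import zify ring lra.
Import Order.TTheory GRing.Theory Num.Theory.
Local Open Scope ring_scope.

Section StrictPeak.
Context {R : realFieldType} {h : nat -> R} {a m : nat}.
Hypotheses (le_am : (a <= m)%N)
  (h_incr : forall k, (a <= k)%N -> (k < m)%N -> h k < h k.+1)
  (h_decr : forall k, (m <= k)%N -> h k.+1 < h k).

Lemma peak_incr : {in [pred k | a <= k <= m]%N &, {homo h : i j / (i < j)%N >-> i < j}}.
Proof.
apply: homo_ltn_in => [y x z|i j|i].
- exact: lt_trans.
- by rewrite !inE => ? ? k ?; rewrite inE; lia.
- by rewrite !inE => /andP[ai _] /andP[_ im]; exact: h_incr.
Qed.

Lemma peak_decr : {in [pred k | m <= k]%N &, {homo h : i j / (i < j)%N >-> j < i}}.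
Proof.
apply: homo_ltn_in => [y x z xy yz|i j|i].
- exact: lt_trans yz xy.
- by rewrite !inE => ? ? k ?; rewrite inE; lia.
- by rewrite !inE => mi _; exact: h_decr.
Qed.

Lemma peak_unimodal : unimodal_on (fun k => (a <= k)%N) h.
Proof.
exists m => //; split=> x y ax ay.
- rewrite leq_eqVlt => /predU1P[-> //|xy] ym.
  by apply/ltW/peak_incr => //; rewrite inE; lia.
- move=> mx; rewrite leq_eqVlt => /predU1P[-> //|xy].
  by apply/ltW/peak_decr => //; rewrite inE; lia.
Qed.

Lemma peak_lt_max k : (a <= k)%N -> k != m -> h k < h m.
Proof.
move=> ak; case: ltngtP => // [km|mk] _.
- by apply: peak_incr; rewrite // inE; lia.
- by apply: peak_decr; rewrite // inE; lia.
Qed.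

Lemma peak_unique_max : exists m0 : nat, [/\ (a <= m0)%N,
  (forall k, (a <= k)%N -> h k <= h m0) &
  (forall m', (a <= m')%N -> (forall k, (a <= k)%N -> h k <= h m') -> m' = m0)].
Proof.
exists m; split=> // [k ak|m' am' m'_max].
- by have [-> //|km] := eqVneq k m; exact/ltW/peak_lt_max.
- apply/eqP/negPn/negP => m'm.
  by have := m'_max m le_am; rewrite leNgt peak_lt_max.
Qed.

End StrictPeak.

Lemma bernoulli_ineq (R : realDomainType) (x : R) n :
  -1 <= x -> 1 + x *+ n <= (1 + x) ^+ n.
Proof.
move=> x_ge; elim: n => [|n IH]; first by rewrite expr0 mulr0n addr0.
have x1_ge0 : 0 <= 1 + x by lra.
rewrite exprSr; apply: le_trans (ler_wpM2r x1_ge0 IH).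
have sq_ge0 : 0 <= x *+ n * x by rewrite mulrnAl mulrn_wge0 // -expr2 sqr_ge0.
rewrite mulrDl mul1r mulrDr mulr1 mulrSr; lra.
Qed.

Lemma ltr_cross_eq {R : numDomainType} {x y a b : R} :
  0 < x -> 0 < b -> x * a = y * b -> (y < x) = (a < b).
Proof. by move=> x_gt0 b_gt0 eq_xy; rewrite -(ltr_pM2r b_gt0) -eq_xy ltr_pM2l. Qed.

Lemma succ_pow_neq k n r : (0 < k)%N -> (0 < n)%N -> ((k.+1 - r) * k.+1 ^ n != k ^ n.+1)%N.
Proof.
move=> k_gt0 n_gt0; apply/eqP => eq_kn.
have dvd_k1 : (k.+1 %| k ^ n.+1)%N by rewrite -eq_kn dvdn_mull // dvdn_exp.
have : coprime k.+1 (k ^ n.+1) by rewrite coprimeXr // coprimeSn.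
by rewrite /coprime (gcdn_idPl dvd_k1); lia.
Qed.

Definition geosum (R : realFieldType) (n k : nat) : R :=
  \sum_(i < n.+1) (k%:R / k.+1%:R) ^+ i.

Lemma geosumE (R : realFieldType) n k :
  k.+1%:R ^+ n.+1 - k%:R ^+ n.+1 = k.+1%:R ^+ n * geosum R n k.
Proof.
have k1_neq0 : k.+1%:R != 0 :> R by rewrite pnatr_eq0.
rewrite subrXX /= -natrB // subSnn mul1r /geosum mulr_sumr.
apply: eq_bigr => -[i /= ]; rewrite ltnS => le_in.
by rewrite expr_div_n mulrA -{2}(subnK le_in) exprD mulrAC mulfK // expf_neq0.
Qed.

Lemma geosum_gap (R : realFieldType) r n k : (r <= k.+1)%N ->
  ((k.+1 - r) * k.+1 ^ n)%:R - (k ^ n.+1)%:R = k.+1%:R ^+ n * (geosum R n k - r%:R) :> R.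
Proof.
move=> le_rk; rewrite natrM natrB // !natrX mulrBr -geosumE [k.+1%:R ^+ n.+1]exprS.
by move: (k.+1%:R ^+ n) (k%:R ^+ n.+1) => A B; ring.
Qed.

Lemma geosum_homo (R : realFieldType) n :
  {homo geosum R n : j k / (j <= k)%N >-> j <= k}.
Proof.
apply: homo_leq => [x|y x z|k]; [exact: lexx|exact: le_trans|].
apply: ler_sum => i _; apply: lerXn2r; rewrite ?nnegrE ?divr_ge0 //.
rewrite ler_pdivrMr ?ltr0n // mulrAC ler_pdivlMr ?ltr0n // -!natrM ler_nat; nia.
Qed.

Lemma geosum_neq (R : realFieldType) r n k : (0 < r)%N -> (0 < n)%N -> (r <= k)%N ->
  geosum R n k != r%:R.
Proof.
move=> r_gt0 n_gt0 le_rk; apply/eqP => u_eq.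
have := geosum_gap R r n k (leqW le_rk); rewrite u_eq subrr mulr0 => /eqP.
rewrite subr_eq0 eqr_nat; apply/negP/succ_pow_neq => //; lia.
Qed.

(* With k = n(n+1), Bernoulli gives geosum >= (n+1)(1 - n/(k+1)) = n + 1/(k+1). *)
Lemma geosum_gtn (R : realFieldType) n : n%:R < geosum R n (n * n.+1).
Proof.
set k := (n * n.+1)%N; set y := k%:R / k.+1%:R : R.
have K_gt0 : 0 < k.+1%:R :> R by rewrite ltr0n.
have y_ge : 1 - n%:R / k.+1%:R <= y ^+ n.
  have -> : y = 1 + - k.+1%:R^-1 by rewrite /y -[k.+1]addn1 natrD; field; lra.
  rewrite (_ : 1 - _ = 1 + (- k.+1%:R^-1) *+ n); last by rewrite mulNrn mulr_natl.
  by apply: bernoulli_ineq; rewrite lerN2 invf_le1 // ler1n.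
have y_le : y ^+ n *+ n.+1 <= geosum R n k.
  rewrite -[n.+1]card_ord -sumr_const; apply: ler_sum => -[i /= lt_in] _.
  apply: ler_wiXn2l; [exact: divr_ge0| |by rewrite -ltnS].
  by rewrite ler_pdivrMr // mul1r ler_nat.
apply: lt_le_trans y_le; apply: lt_le_trans (ler_wMn2r _ y_ge).
have K_eq : k.+1%:R = n%:R * (n%:R + 1) + 1 :> R.
  by rewrite /k -addn1 natrD natrM -addn1 natrD.
have -> : (1 - n%:R / k.+1%:R) *+ n.+1 = n%:R + k.+1%:R^-1 :> R.
  rewrite -mulr_natr K_eq -natr1.
  field; rewrite -K_eq; exact: lt0r_neq0.
by rewrite ltrDl invr_gt0.
Qed.

Lemma prod_natr_sub_ffact (R : comNzRingType) r k : (r <= k.+1)%N ->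
  \prod_(1 <= i < r) (k%:R - i%:R) = (k.-1 ^_ r.-1)%:R :> R.
Proof.
move=> le_rk; rewrite ffact_prod natr_prod big_add1 big_mkord.
by apply: eq_bigr => i _; rewrite -natrB; [congr _%:R|]; case: i => /= i; lia.
Qed.

Lemma fkr_ffact (R : realFieldType) r l k : (r <= k.+1)%N ->
  fkr R r l k = (k.-1 ^_ r.-1)%:R / k%:R ^+ l.-1.
Proof. by move=> le_rk; rewrite /fkr prod_natr_sub_ffact. Qed.

Lemma fkr_gt0 (R : realFieldType) r l k : (0 < r)%N -> (r <= k)%N -> 0 < fkr R r l k.
Proof.
move=> r_gt0 le_rk; rewrite fkr_ffact ?(leqW le_rk) //.
by rewrite divr_gt0 ?exprn_gt0 ?ltr0n ?ffact_gt0; lia.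
Qed.

Lemma fkr_succ (R : realFieldType) r n k : (0 < r)%N -> (r <= k)%N ->
  fkr R r n.+1 k.+1 * ((k.+1 - r) * k.+1 ^ n)%:R = fkr R r n.+1 k * (k ^ n.+1)%:R.
Proof.
move=> r_gt0 le_rk.
have ffact_step : (k ^_ r.-1 * (k.+1 - r) = k * k.-1 ^_ r.-1)%N.
  by rewrite -ffactnS ffactnSr; congr (_ * _); lia.
have k_neq0 : k%:R != 0 :> R by rewrite pnatr_eq0; lia.
have k1_neq0 : k.+1%:R != 0 :> R by rewrite pnatr_eq0.
rewrite !fkr_ffact /=; [|lia..].
rewrite natrM !natrX mulrA mulrAC divfK ?expf_neq0 // -natrM ffact_step natrM.
by rewrite exprSr mulrA divfK ?expf_neq0 // mulrC.
Qed.

Lemma fkr_succ_gt (R : realFieldType) r n k : (0 < r)%N -> (r <= k)%N ->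
  (fkr R r n.+1 k.+1 < fkr R r n.+1 k) = (r%:R < geosum R n k).
Proof.
move=> r_gt0 le_rk; have eq_f := esym (fkr_succ R r n k r_gt0 le_rk).
rewrite (ltr_cross_eq (fkr_gt0 R r n.+1 k r_gt0 le_rk) _ eq_f); last first.
  by rewrite ltr0n muln_gt0 expn_gt0 /=; lia.
by rewrite -subr_gt0 geosum_gap ?pmulr_rgt0 ?exprn_gt0 ?subr_gt0 //; lia.
Qed.

Lemma fkr_succ_lt (R : realFieldType) r n k : (0 < r)%N -> (r <= k)%N ->
  (fkr R r n.+1 k < fkr R r n.+1 k.+1) = (geosum R n k < r%:R).
Proof.
move=> r_gt0 le_rk; have eq_f := fkr_succ R r n k r_gt0 le_rk.
rewrite (ltr_cross_eq (fkr_gt0 R r n.+1 k.+1 r_gt0 (leqW le_rk)) _ eq_f); last first.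
  by rewrite ltr0n expn_gt0; lia.
by rewrite -subr_lt0 geosum_gap ?pmulr_rlt0 ?exprn_gt0 ?subr_lt0 //; lia.
Qed.

Lemma fkr_peak (R : realFieldType) r n : (0 < r)%N -> (r <= n)%N ->
  exists2 m, (r <= m)%N &
    (forall k, (r <= k)%N -> (k < m)%N -> fkr R r n.+1 k < fkr R r n.+1 k.+1) /\
    (forall k, (m <= k)%N -> fkr R r n.+1 k.+1 < fkr R r n.+1 k).
Proof.
move=> r_gt0 le_rn.
have n_gt0 : (0 < n)%N by lia.
have ex_turn : exists k, (r <= k)%N && (r%:R < geosum R n k).
  exists (n * n.+1)%N; apply/andP; split; first nia.
  by apply: le_lt_trans (geosum_gtn R n); rewrite ler_nat.
have [m /andP[le_rm u_m] min_m] := ex_minnP ex_turn.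
exists m => //; split=> [k le_rk lt_km|k le_mk].
- rewrite fkr_succ_lt // lt_neqAle geosum_neq //= leNgt.
  by apply/negP => u_k; have := min_m k; rewrite le_rk u_k => /(_ isT); lia.
- have le_rk : (r <= k)%N by lia.
  rewrite fkr_succ_gt // lt_neqAle eq_sym geosum_neq //=.
  exact: le_trans (ltW u_m) (geosum_homo R n _ _ le_mk).
Qed.

Theorem lemma3p2 (R : realFieldType) (r l : nat) (hr : (2 <= r)%N) (hrl : (r < l)%N) :
  unimodal_on (fun k => (r <= k)%N) (fkr R r l) /\
  exists m : nat, [/\ (r <= m)%N,
    (forall k : nat, (r <= k)%N -> fkr R r l k <= fkr R r l m) &
    (forall m' : nat, (r <= m')%N ->
       (forall k : nat, (r <= k)%N -> fkr R r l k <= fkr R r l m') -> m' = m)].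
Proof.
case: l hrl => // n; rewrite ltnS => le_rn.
have [m le_rm [f_incr f_decr]] := fkr_peak R r n (ltnW hr) le_rn.
split; first exact: peak_unimodal le_rm f_incr f_decr.
exact: peak_unique_max le_rm f_incr f_decr.
Qed.
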